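(* Let $\mathbf A\text{-}\mathbf{Doc}\subseteq\mathbf{DocSites}$ and $\mathbf{GeomDoc}_A\subseteq\mathbf{GeomDoc}$, with topologies $J^A_{\mathbb L}$, form a coarse geometric completion. Then the composite 2-functor $\mathfrak I_A:\mathbf A\text{-}\mathbf{Doc}\hookrightarrow\mathbf{DocSites}\xrightarrow{\mathfrak I}\mathbf{GeomDoc}$ lands in $\mathbf{GeomDoc}_A$ and is a strict left 2-adjoint to the 2-embedding $\mathbf{GeomDoc}_A\hookrightarrow\mathbf A\text{-}\mathbf{Doc}$, $\mathbb L\mapsto(\mathbb L,J^A_{\mathbb L})$; i.e. for all $(P,J)\in\mathbf A\text{-}\mathbf{Doc}$ and $\mathbb L\in\mathbf{GeomDoc}_A$ there is a natural isomorphism of categories $$\mathrm{Hom}_{\mathbf A\text{-}\mathbf{Doc}}((P,J),(\mathbb L,J^A_{\mathbb L}))\cong\mathrm{Hom}_{\mathbf{GeomDoc}_A}(\mathfrak I_A(P,J),\mathbb L),$$ whose inverse is precomposition with $\eta^{(P,J)}:(P,J)\to(\mathfrak I(P,J),J^A_{\mathfrak I(P,J)})$.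
   Context: Doctrine: functor $P:\mathcal C^{op}\to\mathbf{PreOrd}$; $\mathcal C\rtimes P$ has objects $(c,x)$, $x\in P(c)$, morphisms $f:(c,x)\to(d,y)$ the $f:c\to d$ with $x\le P(f)(y)$. $\mathbf{DocSites}$: objects $(P,J)$ with $J$ a Grothendieck topology on $\mathcal C\rtimes P$; 1-cells $(F,a)$ with $F$ flat (a morphism of sites for trivial topologies), $a:P\Rightarrow Q\circ F^{op}$ natural, $F\rtimes a:(c,x)\mapsto(F(c),a_c(x))$ a morphism of sites; 2-cells $\alpha:F\Rightarrow F'$ with $a_c(x)\le Q(\alpha_c)(a'_c(x))$. Geometric doctrine: $\mathbb L:\mathcal C^{op}\to\mathbf{Frm}_{open}$ (frames, frame maps with Frobenius left adjoints $\exists_f$) satisfying relative Beck–Chevalley: for $h:e\to d$ and a sieve $S$ on $(d,V)$ with $V=\bigvee_{(f:(c,U)\to(d,V))\in S}\exists_fU$, $\mathbb L(h)(V)=\bigvee\exists_gW$ over $g:(c,W)\to(e,\mathbb L(h)(V))$ with $h\circ g\in S$. $K_{\mathbb L}$: $\{f_i:(c_i,U_i)\to(d,V)\}$ covers iff $V=\bigvee\exists_{f_i}U_i$. $\mathbf{GeomDoc}$: full 2-subcategory of $\mathbf{DocSites}$ on the $(\mathbb L,K_{\mathbb L})$. Geometric completion $\mathfrak I(P,J)$: $\mathfrak I(P,J)(c)$ is the inclusion-ordered set of sets $S$ of pairs $(f,x)$, $f:d\to c$, $x\in P(d)$, with (a) $(f,x)\in S$, $g:e\to d$, $y\le P(g)(x)$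 imply $(f\circ g,y)\in S$; (b) if $\{h_i:(e_i,y_i)\to(d,x)\}$ is $J$-covering and all $(f\circ h_i,y_i)\in S$ then $(f,x)\in S$; $\mathfrak I(P,J)(f)(S)=\{(g,y):(f\circ g,y)\in S\}$; unit $\eta^{(P,J)}_c(x)$ = smallest such $S$ containing $\{(g,y):y\le P(g)(x)\}$. $\mathfrak I$ is a 2-functor $\mathbf{DocSites}\to\mathbf{GeomDoc}$ left 2-adjoint to the inclusion. A coarse geometric completion consists of: a 2-full (full on 2-cells) 2-subcategory $\mathbf A\text{-}\mathbf{Doc}\subseteq\mathbf{DocSites}$; a 2-subcategory $\mathbf{GeomDoc}_A\subseteq\mathbf{GeomDoc}$ full on 1-cells and 2-cells; for each $\mathbb L\in\mathbf{GeomDoc}_A$ (over $\mathcal C$) a Grothendieck topology $J^A_{\mathbb L}\subseteq K_{\mathbb L}$ on $\mathcal C\rtimes\mathbb L$ with $(\mathbb L,J^A_{\mathbb L})\in\mathbf A\text{-}\mathbf{Doc}$, such that every morphism $(F,a):\mathbb L\to\mathbb L'$ of $\mathbf{GeomDoc}_A$ is a morphism $(\mathbb L,J^A_{\mathbb L})\to(\mathbb L',J^A_{\mathbb L'})$ of $\mathbf A\text{-}\mathbf{Doc}$; and for each $(P,J)\in\mathbf A\text{-}\mathbf{Doc}$, $\mathfrak I(P,J)\in\mathbf{GeomDoc}_A$ and $(\mathrm{id},\eta^{(P,J)}):(P,J)\to(\mathfrak I(P,J),J^A_{\mathfrak I(P,J)})$ is a morphism of $\mathbf A\text{-}\mathbf{Doc}$.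 *)

From Stdlib Require Import ProofIrrelevance FunctionalExtensionality
  PropExtensionality.




Lemma sig_ext {A : Type} {Pr : A -> Prop} (x y : {a | Pr a}) :
  proj1_sig x = proj1_sig y -> x = y.
Proof. destruct x as [x px], y as [y py]; simpl; intros ->; f_equal; apply proof_irrelevance. Qed.

Record Cat := {
  ob :> Type;
  hom : ob -> ob -> Type;
  idm : forall a, hom a a;
  cmp : forall a b c, hom b c -> hom a b -> hom a c;
  cmp_id_l : forall a b (f : hom a b), cmp a b b (idm b) f = f;
  cmp_id_r : forall a b (f : hom a b), cmp a a b f (idm a) = f;
  cmp_assoc : forall a b c d (f : hom a b) (g : hom b c) (h : hom c d),
      cmp a c d h (cmp a b c g f) = cmp a b d (cmp b c d h g) f }.
Arguments hom : clear implicits.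
Arguments idm {_} _.
Arguments cmp {_ _ _ _} _ _.

Record Functor (C D : Cat) := {
  fobj : C -> D;
  fmap : forall a b, hom C a b -> hom D (fobj a) (fobj b);
  fmap_id : forall a, fmap a a (idm a) = idm (fobj a);
  fmap_cmp : forall a b c (f : hom C a b) (g : hom C b c),
      fmap a c (cmp g f) = cmp (fmap b c g) (fmap a b f) }.
Arguments fobj {_ _} _ _.
Arguments fmap {_ _} _ {_ _} _.

Definition FId (C : Cat) : Functor C C.
Proof.
  refine {| fobj := fun a => a; fmap := fun a b f => f |}; reflexivity.
Defined.

Definition Fcomp {C D E : Cat} (G : Functor D E) (F : Functor C D) : Functor C E.
Proof.
  refine {| fobj := fun a => fobj G (fobj F a);
            fmap := fun a b f => fmap G (fmap F f) |}.
  - intros a; rewrite !fmap_id; reflexivity.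
  - intros a b c f g; rewrite !fmap_cmp; reflexivity.
Defined.

(* ---------- doctrines: functors C^op -> PreOrd ---------- *)
Record Doctrine (C : Cat) := {
  pt : C -> Type;
  ple : forall c, pt c -> pt c -> Prop;
  ple_refl : forall c (x : pt c), ple c x x;
  ple_trans : forall c (x y z : pt c), ple c x y -> ple c y z -> ple c x z;
  pmap : forall c d, hom C c d -> pt d -> pt c;
  pmap_mono : forall c d (f : hom C c d) x y, ple d x y -> ple c (pmap c d f x) (pmap c d f y);
  pmap_id : forall c (x : pt c), pmap c c (idm c) x = x;
  pmap_cmp : forall c d e (f : hom C c d) (g : hom C d e) x,
      pmap c e (cmp g f) x = pmap c d f (pmap d e g x) }.
Arguments pt {_} _ _.
Arguments ple {_} _ {_} _ _.
Arguments pmap {_} _ {_ _} _ _.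

Section Groth.
Variables (C : Cat) (P : Doctrine C).
Definition gob := {c : C & pt P c}.
Definition ghom (a b : gob) :=
  {f : hom C (projT1 a) (projT1 b) | ple P (projT2 a) (pmap P f (projT2 b))}.
Definition gid (a : gob) : ghom a a.
Proof. exists (idm _); rewrite pmap_id; apply ple_refl. Defined.
Definition gcmp (a b c : gob) (g : ghom b c) (f : ghom a b) : ghom a c.
Proof.
  exists (cmp (proj1_sig g) (proj1_sig f)).
  rewrite pmap_cmp. eapply ple_trans; [exact (proj2_sig f)|].
  apply pmap_mono; exact (proj2_sig g).
Defined.
Definition groth : Cat.
Proof.
  refine {| ob := gob; hom := ghom; idm := gid; cmp := gcmp |}.
  - intros; apply sig_ext; simpl; apply cmp_id_l.
  - intros; apply sig_ext; simpl; apply cmp_id_r.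
  - intros; apply sig_ext; simpl; apply cmp_assoc.
Defined.
End Groth.
Arguments groth {C} P.

Definition sieve (C : Cat) (a : C) := forall b : C, hom C b a -> Prop.

Definition is_sieve {C : Cat} {a : C} (S : sieve C a) : Prop :=
  forall b c (f : hom C b a) (g : hom C c b), S b f -> S c (cmp f g).

Definition pull {C : Cat} {a b : C} (h : hom C b a) (S : sieve C a) : sieve C b :=
  fun c g => S c (cmp h g).

Definition topology (C : Cat) := forall a : C, sieve C a -> Prop.

Definition is_topology {C : Cat} (J : topology C) : Prop :=
  (forall a S, J a S -> is_sieve S) /\
  (forall a, J a (fun _ _ => True)) /\
  (forall a b (h : hom C b a) S, J a S -> J b (pull h S)) /\
  (forall a (S R : sieve C a), is_sieve R -> J a S ->
      (forall b (f : hom C b a), S b f -> J b (pull f R)) -> J a R).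

Definition triv (C : Cat) : topology C :=
  fun a S => is_sieve S /\ S a (idm a).

(* F : (C,J) -> (D,K) morphism of sites (SGA4 / Caramello), for the
   functor with object part Fo and arrow part Fm *)
Definition is_mos {C D : Cat} (J : topology C) (K : topology D)
  (Fo : C -> D) (Fm : forall a b, hom C a b -> hom D (Fo a) (Fo b)) : Prop :=
  (forall a S, J a S ->
     K (Fo a) (fun d g => exists b (f : hom C b a) (k : hom D d (Fo b)),
                              S b f /\ g = cmp (Fm b a f) k)) /\
  (* local non-emptiness *)
  (forall d : D, K d (fun e _ => exists c : C, inhabited (hom D e (Fo c)))) /\
  (* local connectedness for spans *)
  (forall (d : D) (c1 c2 : C) (g1 : hom D d (Fo c1)) (g2 : hom D d (Fo c2)),
     K d (fun e h => exists c (f1 : hom C c c1) (f2 : hom C c c2) (k : hom D e (Fo c)),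
             cmp (Fm _ _ f1) k = cmp g1 h /\ cmp (Fm _ _ f2) k = cmp g2 h)) /\
  (* local equalizers *)
  (forall (d : D) (c1 c2 : C) (f1 f2 : hom C c1 c2) (g : hom D d (Fo c1)),
     cmp (Fm _ _ f1) g = cmp (Fm _ _ f2) g ->
     K d (fun e h => exists c (e' : hom C c c1) (k : hom D e (Fo c)),
             cmp f1 e' = cmp f2 e' /\ cmp (Fm _ _ e') k = cmp g h)).

Definition flat {C D : Cat} (F : Functor C D) : Prop :=
  is_mos (triv C) (triv D) (fobj F) (fun a b f => fmap F f).

Record DocSite := { sC : Cat; sP : Doctrine sC; sJ : topology (groth sP) }.

Definition IsDocSite (X : DocSite) : Prop := is_topology (sJ X).

Record Mor1 {C D : Cat} (P : Doctrine C) (Q : Doctrine D) := {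
  mF : Functor C D;
  ma : forall c, pt P c -> pt Q (fobj mF c) }.
Arguments mF {C D P Q} m.
Arguments ma {C D P Q} m c x.

Definition a_mono {C D} {P : Doctrine C} {Q : Doctrine D} (u : Mor1 P Q) : Prop :=
  forall c (x y : pt P c), ple P x y -> ple Q (ma u c x) (ma u c y).
Definition a_nat {C D} {P : Doctrine C} {Q : Doctrine D} (u : Mor1 P Q) : Prop :=
  forall c d (f : hom C c d) (y : pt P d),
    ma u c (pmap P f y) = pmap Q (fmap (mF u) f) (ma u d y).

Definition rt_o {C D} {P : Doctrine C} {Q : Doctrine D} (u : Mor1 P Q)
  (a : groth P) : groth Q :=
  existT _ (fobj (mF u) (projT1 a)) (ma u _ (projT2 a)).
Definition rt_m {C D} {P : Doctrine C} {Q : Doctrine D} (u : Mor1 P Q)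
  (hm : a_mono u) (hn : a_nat u) (a b : groth P) (f : hom (groth P) a b) :
  hom (groth Q) (rt_o u a) (rt_o u b).
Proof.
  exists (fmap (mF u) (proj1_sig f)); simpl.
  rewrite <- hn. apply hm. exact (proj2_sig f).
Defined.

Definition IsDocMor (X Y : DocSite) (u : Mor1 (sP X) (sP Y)) : Prop :=
  flat (mF u) /\
  exists (hm : a_mono u) (hn : a_nat u),
    is_mos (sJ X) (sJ Y) (rt_o u) (rt_m u hm hn).

Definition Is2Cell {C D} {P : Doctrine C} {Q : Doctrine D} (u v : Mor1 P Q)
  (al : forall c, hom D (fobj (mF u) c) (fobj (mF v) c)) : Prop :=
  (forall c d (f : hom C c d), cmp (al d) (fmap (mF u) f) = cmp (fmap (mF v) f) (al c)) /\
  (forall c (x : pt P c), ple Q (ma u c x) (pmap Q (al c) (ma v c x))).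

Definition id1 {C} (P : Doctrine C) : Mor1 P P :=
  {| mF := FId C; ma := fun c x => x |}.
Definition comp1 {C D E} {P : Doctrine C} {Q : Doctrine D} {R : Doctrine E}
  (v : Mor1 Q R) (u : Mor1 P Q) : Mor1 P R :=
  {| mF := Fcomp (mF v) (mF u); ma := fun c x => ma v _ (ma u c x) |}.

Section Geom.
Variables (C : Cat) (L : Doctrine C).

Definition is_join {c} (X : pt L c -> Prop) (v : pt L c) : Prop :=
  forall w, ple L v w <-> (forall x, X x -> ple L x w).
Definition is_meet {c} (x y m : pt L c) : Prop :=
  forall w, ple L w m <-> (ple L w x /\ ple L w y).
Definition is_top {c} (t : pt L c) : Prop := forall w, ple L w t.

(* "V = \/_{f:(c,U)->(d,V) in S} exists_f U", written via the adjunction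
   exists_f -| L(f) : exists_f U <= W  iff  U <= L(f)(W) *)
Definition covers_join {a : groth L} (S : sieve (groth L) a) : Prop :=
  forall W : pt L (projT1 a),
    ple L (projT2 a) W <->
    (forall b (f : hom (groth L) b a), S b f -> ple L (projT2 b) (pmap L (proj1_sig f) W)).

Definition Kgeom : topology (groth L) :=
  fun a S => is_sieve S /\ covers_join S.

Definition hlift {e d : C} (h : hom C e d) (V : pt L d) :
  hom (groth L) (existT _ e (pmap L h V)) (existT _ d V) :=
  exist _ h (ple_refl C L e (pmap L h V)).

Definition IsGeom : Prop :=
  (* each L(c) is a frame *)
  (forall c (x y : pt L c), ple L x y -> ple L y x -> x = y) /\
  (forall c (X : pt L c -> Prop), exists v, is_join X v) /\
  (forall c, exists t : pt L c, is_top t) /\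
  (forall c (x y : pt L c), exists m, is_meet x y m) /\
  (forall c (x v m : pt L c) (X : pt L c -> Prop), is_join X v -> is_meet x v m ->
      is_join (fun z => exists y, X y /\ is_meet x y z) m) /\
  (* each L(f) is a frame homomorphism *)
  (forall c d (f : hom C c d) (X : pt L d -> Prop) v, is_join X v ->
      is_join (fun z => exists y, X y /\ z = pmap L f y) (pmap L f v)) /\
  (forall c d (f : hom C c d) t, is_top t -> is_top (pmap L f t)) /\
  (forall c d (f : hom C c d) (x y m : pt L d), is_meet x y m ->
      is_meet (pmap L f x) (pmap L f y) (pmap L f m)) /\
  (* ... with a left adjoint satisfying Frobenius reciprocity *)
  (forall c d (f : hom C c d), exists ex : pt L c -> pt L d,
      (forall U V, ple L (ex U) V <-> ple L U (pmap L f V)) /\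
      (forall U V m m', is_meet U (pmap L f V) m -> is_meet (ex U) V m' -> ex m = m')) /\
  (* relative Beck-Chevalley condition *)
  (forall (d e : C) (h : hom C e d) (V : pt L d) (S : sieve (groth L) (existT _ d V)),
      is_sieve S -> covers_join S ->
      covers_join (pull (hlift h V) S)).
End Geom.
Arguments Kgeom {C} L.
Arguments IsGeom {C} L.

Record GDoc := { gC : Cat; gL : Doctrine gC }.

Definition toSite (G : GDoc) (J : topology (groth (gL G))) : DocSite :=
  {| sC := gC G; sP := gL G; sJ := J |}.
Definition KSite (G : GDoc) : DocSite := toSite G (Kgeom (gL G)).

Section Completion.
Variables (C : Cat) (P : Doctrine C) (J : topology (groth P)).

Definition closedI {c : C} (S : forall d, hom C d c -> pt P d -> Prop) : Prop :=
  (forall d e (f : hom C d c) (x : pt P d) (g : hom C e d) (y : pt P e),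
      S d f x -> ple P y (pmap P g x) -> S e (cmp f g) y) /\
  (forall d (f : hom C d c) (x : pt P d) (R : sieve (groth P) (existT _ d x)),
      J _ R ->
      (forall e (y : pt P e) (h : hom (groth P) (existT _ e y) (existT _ d x)),
          R _ h -> S e (cmp f (proj1_sig h)) y) ->
      S d f x).

Definition Ipt (c : C) := {S : forall d, hom C d c -> pt P d -> Prop | closedI S}.
Definition Iple (c : C) (S T : Ipt c) : Prop :=
  forall d f x, proj1_sig S d f x -> proj1_sig T d f x.

Definition Imap (c c' : C) (f : hom C c c') (S : Ipt c') : Ipt c.
Proof.
  exists (fun d g y => proj1_sig S d (cmp f g) y).
  destruct S as [S [Ha Hb]]; simpl; split.
  - intros d e g x k y H1 H2. rewrite cmp_assoc. apply (Ha _ _ _ _ _ _ H1 H2).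
  - intros d g x R HR H. apply (Hb _ _ _ R HR). intros e y h Hh.
    rewrite <- cmp_assoc. apply H; exact Hh.
Defined.

Definition Idoc : Doctrine C.
Proof.
  refine {| pt := Ipt; ple := Iple; pmap := Imap |}.
  - intros c x d f y H; exact H.
  - intros c x y z H1 H2 d f w H; apply H2, H1, H.
  - intros c d f x y H e g z; simpl; apply H.
  - intros c x; apply sig_ext; simpl.
    apply functional_extensionality_dep; intro d.
    apply functional_extensionality; intro g.
    rewrite cmp_id_l; reflexivity.
  - intros c d e f g x; apply sig_ext; simpl.
    apply functional_extensionality_dep; intro d'.
    apply functional_extensionality; intro k.
    rewrite cmp_assoc; reflexivity.
Defined.

(* eta_c(x) = smallest J-closed set containing {(g,y) : y <= P(g)(x)} *)
Definition eta (c : C) (x : pt P c) : pt Idoc c.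
Proof.
  exists (fun d g y => forall S : forall d, hom C d c -> pt P d -> Prop,
            closedI S -> (forall d' g' y', ple P y' (pmap P g' x) -> S d' g' y') ->
            S d g y).
  split.
  - intros d e f x0 g y H1 H2 S HS Hgen.
    apply (proj1 HS _ _ _ _ _ _ (H1 S HS Hgen) H2).
  - intros d f x0 R HR H S HS Hgen.
    apply (proj2 HS _ _ _ R HR). intros e y h Hh. apply (H e y h Hh S HS Hgen).
Defined.
End Completion.
Arguments Idoc {C} P J.
Arguments eta {C} P J c x.

Definition Isite (X : DocSite) : GDoc :=
  {| gC := sC X; gL := Idoc (sP X) (sJ X) |}.

Definition etaMor (X : DocSite) : Mor1 (sP X) (gL (Isite X)) :=
  {| mF := FId (sC X); ma := eta (sP X) (sJ X) |}.

Record CoarseCompletion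
  (AObj : DocSite -> Prop)
  (AMor : forall X Y : DocSite, Mor1 (sP X) (sP Y) -> Prop)
  (GA : GDoc -> Prop)
  (JA : forall G : GDoc, topology (groth (gL G))) : Prop := {
  (* A-Doc is a 2-subcategory of DocSites (2-full: all 2-cells kept) *)
  cc_obj : forall X, AObj X -> IsDocSite X;
  cc_mor : forall X Y u, AObj X -> AObj Y -> AMor X Y u -> IsDocMor X Y u;
  cc_id : forall X, AObj X -> AMor X X (id1 (sP X));
  cc_comp : forall X Y Z (u : Mor1 (sP X) (sP Y)) (v : Mor1 (sP Y) (sP Z)),
      AObj X -> AObj Y -> AObj Z -> AMor X Y u -> AMor Y Z v -> AMor X Z (comp1 v u);
  (* GeomDoc_A is a (1- and 2-full) 2-subcategory of GeomDoc *)
  cc_geom : forall G, GA G -> IsGeom (gL G);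
  cc_JA_sub : forall G, GA G -> forall a S, JA G a S -> Kgeom (gL G) a S;
  cc_JA_obj : forall G, GA G -> AObj (toSite G (JA G));
  cc_JA_mor : forall G G' (u : Mor1 (gL G) (gL G')), GA G -> GA G' ->
      IsDocMor (KSite G) (KSite G') u -> AMor (toSite G (JA G)) (toSite G' (JA G')) u;
  cc_I : forall X, AObj X -> GA (Isite X);
  cc_eta : forall X, AObj X ->
      AMor X (toSite (Isite X) (JA (Isite X))) (etaMor X) }.

From Stdlib Require Import ProofIrrelevance FunctionalExtensionality ClassicalEpsilon Eqdep.

(* Since I(P,J) lies in GeomDoc_A and the A-morphisms are closed under
   composition, precomposition with eta lands in A-Doc; the content is that it
   is bijective on 1-cells and on 2-cells.  Every A-morphism u = (F,a) into
   (L, J^A_L) is a morphism of sites into (L, K_L), since J^A_L is contained in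
   K_L. *)

(* Flat functors: the two filteredness conditions, read off at the identity
   arrow of a maximal (trivially covering) sieve. *)
Section Flat.
Context {C D : Cat} (F : Functor C D) (HF : flat F).

Lemma flat_span e c1 c2 (g1 : hom D e (fobj F c1)) (g2 : hom D e (fobj F c2)) :
  exists c0 (a1 : hom C c0 c1) (a2 : hom C c0 c2) (k0 : hom D e (fobj F c0)),
    cmp (fmap F a1) k0 = g1 /\ cmp (fmap F a2) k0 = g2.
Proof.
  destruct HF as (_ & _ & Hspan & _).
  destruct (Hspan e c1 c2 g1 g2) as [_ [c0 [a1 [a2 [k0 [E1 E2]]]]]].
  rewrite cmp_id_r in E1, E2. exists c0, a1, a2, k0. split; assumption.
Qed.

Lemma flat_equalizer e c1 c2 (f1 f2 : hom C c1 c2) (g : hom D e (fobj F c1)) :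
  cmp (fmap F f1) g = cmp (fmap F f2) g ->
  exists c0 (e' : hom C c0 c1) (k : hom D e (fobj F c0)),
    cmp f1 e' = cmp f2 e' /\ cmp (fmap F e') k = g.
Proof.
  intros Hg. destruct HF as (_ & _ & _ & Heq).
  destruct (Heq e c1 c2 f1 f2 g Hg) as [_ [c0 [e' [k [E1 E2]]]]].
  rewrite cmp_id_r in E2. exists c0, e', k. split; assumption.
Qed.
End Flat.

Lemma pull_sieve {C : Cat} {a b : C} (h : hom C b a) (S : sieve C a) :
  is_sieve S -> is_sieve (pull h S).
Proof. intros HS x y f g Hf. unfold pull in *. rewrite cmp_assoc. apply HS, Hf. Qed.

Section SiteSieves.
Context {C D : Cat} (Fo : C -> D) (Fm : forall a b, hom C a b -> hom D (Fo a) (Fo b)).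

Definition image_sieve {a : C} (S : sieve C a) : sieve D (Fo a) :=
  fun d g => exists b (f : hom C b a) (k : hom D d (Fo b)), S b f /\ g = cmp (Fm b a f) k.

Definition span_sieve {d : D} {c1 c2 : C} (g1 : hom D d (Fo c1)) (g2 : hom D d (Fo c2)) :
  sieve D d :=
  fun e h => exists c (f1 : hom C c c1) (f2 : hom C c c2) (k : hom D e (Fo c)),
    cmp (Fm _ _ f1) k = cmp g1 h /\ cmp (Fm _ _ f2) k = cmp g2 h.

Lemma image_sieve_is_sieve {a : C} (S : sieve C a) : is_sieve (image_sieve S).
Proof.
  intros b b' g g' [b0 [f [k [Hf ->]]]]. exists b0, f, (cmp k g'). split; [exact Hf|].
  symmetry; apply cmp_assoc.
Qed.

Lemma span_sieve_is_sieve {d : D} {c1 c2 : C} (g1 : hom D d (Fo c1)) (g2 : hom D d (Fo c2)) :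
  is_sieve (span_sieve g1 g2).
Proof.
  intros b b' h h' [c [f1 [f2 [k [E1 E2]]]]]. exists c, f1, f2, (cmp k h').
  split; rewrite cmp_assoc; [rewrite E1 | rewrite E2]; symmetry; apply cmp_assoc.
Qed.

Lemma span_sieve_pull {d d' : D} {c1 c2 : C} (a : hom D d' d)
  (g1 : hom D d (Fo c1)) (g2 : hom D d (Fo c2)) e (h : hom D e d') :
  span_sieve (cmp g1 a) (cmp g2 a) e h -> span_sieve g1 g2 e (cmp a h).
Proof.
  intros [c [f1 [f2 [k [E1 E2]]]]]. exists c, f1, f2, k.
  rewrite E1, E2. split; symmetry; apply cmp_assoc.
Qed.
End SiteSieves.

Section Coverage.
Context {C : Cat} (L : Doctrine C).

Lemma le_along_arrow (a b : groth L) (f : hom (groth L) b a) W :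
  ple L (projT2 a) W -> ple L (projT2 b) (pmap L (proj1_sig f) W).
Proof. intros H. eapply ple_trans; [exact (proj2_sig f)|]. apply pmap_mono, H. Qed.

Lemma covers_join_intro (a : groth L) (S : sieve (groth L) a) :
  (forall W, (forall b (f : hom (groth L) b a), S b f ->
                ple L (projT2 b) (pmap L (proj1_sig f) W)) -> ple L (projT2 a) W) ->
  covers_join C L S.
Proof.
  intros H W; split; [|apply H]. intros Hle b f _. apply le_along_arrow, Hle.
Qed.

Lemma Kgeom_upward (a : groth L) (R R' : sieve (groth L) a) :
  covers_join C L R -> is_sieve R' -> (forall b f, R b f -> R' b f) -> Kgeom L a R'.
Proof.
  intros HR HS' Hsub. split; [exact HS'|]. apply covers_join_intro.
  intros W HW. apply (proj2 (HR W)). intros b f Hf. apply HW, Hsub, Hf.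
Qed.

Lemma Kgeom_local (a : groth L) (R R' : sieve (groth L) a) :
  Kgeom L a R -> is_sieve R' ->
  (forall b f, R b f -> covers_join C L (pull f R')) -> Kgeom L a R'.
Proof.
  intros [_ HR] HS' Hloc. split; [exact HS'|]. apply covers_join_intro.
  intros W HW. apply (proj2 (HR W)). intros b f Hf.
  apply (proj2 (Hloc b f Hf (pmap L (proj1_sig f) W))).
  intros c g Hg. rewrite <- pmap_cmp. exact (HW c (cmp f g) Hg).
Qed.
End Coverage.

Lemma is_meet_sym {C} (L : Doctrine C) c (x y m : pt L c) :
  is_meet C L x y m -> is_meet C L y x m.
Proof. intros H w. specialize (H w). tauto. Qed.

Definition is_image {C} (L : Doctrine C) {c d} (f : hom C c d) (U : pt L c) (z : pt L d) :=
  forall V, ple L z V <-> ple L U (pmap L f V).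

Section GeometricFacts.
Context {C : Cat} (L : Doctrine C) (HG : IsGeom L).

Lemma geom_antisym c (x y : pt L c) : ple L x y -> ple L y x -> x = y.
Proof. apply HG. Qed.

Lemma geom_join c (X : pt L c -> Prop) : exists v, is_join C L X v.
Proof. apply HG. Qed.

Lemma geom_meet c (x y : pt L c) : exists m, is_meet C L x y m.
Proof. apply HG. Qed.

Lemma geom_image c d (f : hom C c d) U : exists z, is_image L f U z.
Proof.
  destruct HG as (_&_&_&_&_&_&_&_&Hex&_). destruct (Hex _ _ f) as [ex [Had _]].
  exists (ex U). intros V; apply Had.
Qed.

Lemma image_unique c d (f : hom C c d) U z z' :
  is_image L f U z -> is_image L f U z' -> z = z'.
Proof.
  intros H1 H2. apply geom_antisym; [apply H1, H2 | apply H2, H1]; apply ple_refl.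
Qed.

Lemma frobenius c d (f : hom C c d) U V z mm m' :
  is_image L f U z -> is_meet C L U (pmap L f V) mm -> is_meet C L z V m' ->
  is_image L f mm m'.
Proof.
  intros Hz Hmm Hm'. destruct HG as (_&_&_&_&_&_&_&_&Hex&_).
  destruct (Hex _ _ f) as [ex [Had Hfr]].
  assert (E : z = ex U) by (apply (image_unique _ _ f U); [exact Hz | intros W; apply Had]).
  subst z. rewrite <- (Hfr U V mm m' Hmm Hm'). intros W; apply Had.
Qed.

Lemma distributive c (x v m : pt L c) (X : pt L c -> Prop) :
  is_join C L X v -> is_meet C L x v m ->
  is_join C L (fun z => exists y, X y /\ is_meet C L x y z) m.
Proof. apply HG. Qed.

Lemma beck_chevalley (d e : C) (h : hom C e d) (V : pt L d) (S : sieve (groth L) (existT _ d V)) :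
  is_sieve S -> covers_join C L S -> covers_join C L (pull (hlift C L h V) S).
Proof. apply HG. Qed.

Lemma covers_join_image_join (a : groth L) (S : sieve (groth L) a) :
  covers_join C L S ->
  is_join C L (fun z => exists b (m : hom (groth L) b a), S b m /\
                          is_image L (proj1_sig m) (projT2 b) z) (projT2 a).
Proof.
  intros HS Y; split.
  - intros HY z [b [m [Hm Hz]]]. apply Hz. exact (proj1 (HS Y) HY b m Hm).
  - intros HX. apply (proj2 (HS Y)). intros b m Hm.
    destruct (geom_image _ _ (proj1_sig m) (projT2 b)) as [z Hz].
    apply Hz, HX. exists b, m. split; assumption.
Qed.

(* K_L-covering sieves are stable under pullback along any arrow: relative
   Beck-Chevalley handles the underlying arrow, distributivity and Frobenius
   the restriction to a smaller element. *)
Lemma Kgeom_pull (a b : groth L) (h : hom (groth L) b a) (S : sieve (groth L) a) :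
  is_sieve S -> covers_join C L S -> covers_join C L (pull h S).
Proof.
  destruct a as [d V], b as [e W], h as [h0 Hh0]. cbn in Hh0. intros HS Hcov.
  set (S' := pull (hlift C L h0 V) S).
  assert (HJ := covers_join_image_join _ S' (beck_chevalley d e h0 V S HS Hcov)).
  assert (HM : is_meet C L W (pmap L h0 V) W).
  { intros w; split; [intros Hw; split; [exact Hw | eapply ple_trans; eassumption] | tauto]. }
  assert (HD := distributive _ _ _ _ _ HJ HM).
  apply covers_join_intro. intros Z HZ. apply (proj2 (HD Z)).
  intros z [y [[[e' W'] [m [Hm Hy]]] Hz]]. cbn in Hy.
  destruct (geom_meet _ W' (pmap L (proj1_sig m) W)) as [mm Hmm].
  apply (frobenius _ _ _ W' W y mm z Hy Hmm (is_meet_sym L _ _ _ _ Hz)).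
  assert (Hmm1 : ple L mm W') by exact (proj1 (proj1 (Hmm mm) (ple_refl _ _ _ _))).
  assert (Hmm2 : ple L mm (pmap L (proj1_sig m) W))
    by exact (proj2 (proj1 (Hmm mm) (ple_refl _ _ _ _))).
  set (m' := exist _ (proj1_sig m) Hmm2 : hom (groth L) (existT _ e' mm) (existT _ e W)).
  set (i := exist _ (idm e') (eq_ind_r (fun t => ple L mm t) Hmm1 (pmap_id _ _ _ _))
            : hom (groth L) (existT _ e' mm) (existT _ e' W')).
  apply (HZ _ m'). unfold pull.
  match goal with |- S _ ?t => replace t with (cmp (cmp (hlift C L h0 V) m) i) end.
  - exact (HS _ _ _ i Hm).
  - apply sig_ext. cbn. rewrite cmp_id_r. reflexivity.
Qed.
End GeometricFacts.

Section Unit.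
Context {C : Cat} (P : Doctrine C) (J : topology (groth P)).
Local Notation I := (Idoc P J).

Definition eta_mor : Mor1 P I := Build_Mor1 C C P I (FId C) (eta P J).

Lemma eta_gen c (x : pt P c) d (g : hom C d c) y :
  ple P y (pmap P g x) -> proj1_sig (eta P J c x) d g y.
Proof. intros Hy S HS Hg; apply Hg, Hy. Qed.

Lemma eta_min c (x : pt P c) (T : Ipt C P J c) :
  (forall d g y, ple P y (pmap P g x) -> proj1_sig T d g y) -> Iple C P J c (eta P J c x) T.
Proof. intros H d f y Hy. apply Hy; [exact (proj2_sig T) | exact H]. Qed.

Lemma eta_self c (x : pt P c) : proj1_sig (eta P J c x) c (idm c) x.
Proof. apply eta_gen. rewrite pmap_id. apply ple_refl. Qed.

Lemma mem_iff_eta_le c (S : Ipt C P J c) d (f : hom C d c) x :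
  proj1_sig S d f x <-> Iple C P J d (eta P J d x) (Imap C P J d c f S).
Proof.
  split.
  - intros H. apply eta_min. intros e g y Hy. exact (proj1 (proj2_sig S) d e f x g y H Hy).
  - intros H. pose proof (H d (idm d) x (eta_self d x)) as H1. cbn in H1.
    rewrite cmp_id_r in H1. exact H1.
Qed.

Definition eta_generators c (S : Ipt C P J c) : sieve (groth I) (existT _ c S) :=
  fun b h => exists d x (h0 : hom (groth I) (existT _ d (eta P J d x)) (existT _ c S))
               (k0 : hom (groth I) b (existT _ d (eta P J d x))), h = cmp h0 k0.

Lemma eta_generators_cover c (S : Ipt C P J c) : Kgeom I _ (eta_generators c S).
Proof.
  split.
  - intros b b' h g [d [x [h0 [k0 ->]]]]. exists d, x, h0, (cmp k0 g). symmetry; apply cmp_assoc.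
  - apply covers_join_intro. intros W HW d f x Hx.
    set (h0 := exist _ f (proj1 (mem_iff_eta_le c S d f x) Hx)
               : hom (groth I) (existT _ d (eta P J d x)) (existT _ c S)).
    assert (Hle : Iple C P J d (eta P J d x) (Imap C P J d c (cmp f (idm d)) W)).
    { apply (HW _ (cmp h0 (gid _ _ _))). exists d, x, h0, (gid _ _ _). reflexivity. }
    rewrite cmp_id_r in Hle. exact (proj2 (mem_iff_eta_le c W d f x) Hle).
Qed.
End Unit.

(* Its extension along eta is
     ext_c(S) = \/ { exists_{F f} a(x) | (f,x) in S },
   the left adjoint of Z |-> { (f,x) | a(x) <= L(F f)(Z) }. *)
Section Extension.
Context {C : Cat} (P : Doctrine C) (J : topology (groth P))
  {D : Cat} (L : Doctrine D) (JL : topology (groth L)) (u : Mor1 P L)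
  (hm : a_mono u) (hn : a_nat u)
  (Hmos : is_mos J JL (rt_o u) (rt_m u hm hn))
  (Hsub : forall a S, JL a S -> Kgeom L a S)
  (Hflat : flat (mF u)) (HG : IsGeom L).

Local Notation F := (mF u).
Local Notation I := (Idoc P J).

(* the preimage of Z is J-closed because u sends J-covers to K_L-covers *)
Definition preimage_ideal c (Z : pt L (fobj F c)) : Ipt C P J c.
Proof.
  exists (fun d f y => ple L (ma u d y) (pmap L (fmap F f) Z)). split.
  - intros d e f x g y H1 H2.
    eapply ple_trans; [apply hm, H2|]. rewrite hn, fmap_cmp, pmap_cmp. apply pmap_mono, H1.
  - intros d f x R HR H.
    destruct (Hsub _ _ (proj1 Hmos _ R HR)) as [_ Hc].
    apply (proj2 (Hc (pmap L (fmap F f) Z))).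
    intros b g [[e y] [f0 [k [Hb0 ->]]]]. specialize (H e y f0 Hb0).
    cbn. rewrite !pmap_cmp.
    eapply ple_trans; [exact (proj2_sig k)|]. cbn. apply pmap_mono.
    rewrite <- pmap_cmp, <- fmap_cmp. exact H.
Defined.

Definition image_family c (S : Ipt C P J c) : pt L (fobj F c) -> Prop :=
  fun z => exists d (f : hom C d c) x, proj1_sig S d f x /\ is_image L (fmap F f) (ma u d x) z.

Definition ext c (S : Ipt C P J c) : pt L (fobj F c) :=
  proj1_sig (constructive_indefinite_description _ (geom_join L HG _ (image_family c S))).

Lemma ext_join c S : is_join D L (image_family c S) (ext c S).
Proof. unfold ext. destruct constructive_indefinite_description; assumption. Qed.

Lemma ext_le_iff c S Z : ple L (ext c S) Z <->
  (forall d f x, proj1_sig S d f x -> ple L (ma u d x) (pmap L (fmap F f) Z)).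
Proof.
  rewrite (ext_join c S Z). split.
  - intros H d f x Hx. destruct (geom_image L HG _ _ (fmap F f) (ma u d x)) as [z Hz].
    apply Hz, H. exists d, f, x. split; assumption.
  - intros H z [d [f [x [Hx Hz]]]]. apply Hz, H, Hx.
Qed.

Lemma ext_le_preimage c S Z : ple L (ext c S) Z <-> Iple C P J c S (preimage_ideal c Z).
Proof. rewrite ext_le_iff. split; intros H d f x; apply H. Qed.

Lemma ext_upper c S d f x :
  proj1_sig S d f x -> ple L (ma u d x) (pmap L (fmap F f) (ext c S)).
Proof. intros H. apply (proj1 (ext_le_iff c S _) (ple_refl _ _ _ _)), H. Qed.

Lemma ext_mono c (S S' : Ipt C P J c) : Iple C P J c S S' -> ple L (ext c S) (ext c S').
Proof. intros H. apply ext_le_iff. intros d f x Hx. apply ext_upper, H, Hx. Qed.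

Lemma ext_eta c x : ext c (eta P J c x) = ma u c x.
Proof.
  apply (geom_antisym L HG).
  - apply ext_le_preimage, eta_min. intros d g y Hy. cbn.
    eapply ple_trans; [apply hm, Hy|]. rewrite hn. apply ple_refl.
  - pose proof (ext_upper c (eta P J c x) c (idm c) x (eta_self P J c x)) as H.
    rewrite fmap_id, pmap_id in H. exact H.
Qed.

Definition ext_generators c (S : Ipt C P J c) : sieve (groth L) (existT _ (fobj F c) (ext c S)) :=
  fun b m => exists d (g : hom C d c) x (k : hom (groth L) b (existT _ (fobj F d) (ma u d x))),
     proj1_sig S d g x /\ proj1_sig m = cmp (fmap F g) (proj1_sig k).

Lemma ext_generators_sieve c S : is_sieve (ext_generators c S).
Proof.
  intros b b' m g [d [h [x [k [Hx E]]]]].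
  exists d, h, x, (cmp k g). split; [exact Hx|]. cbn in *. rewrite E. symmetry; apply cmp_assoc.
Qed.

Lemma ext_generators_cover c S : covers_join D L (ext_generators c S).
Proof.
  apply covers_join_intro. intros W H. apply ext_le_iff. intros d g x Hx.
  set (m := exist _ (fmap F g) (ext_upper c S d g x Hx)
            : hom (groth L) (existT _ (fobj F d) (ma u d x)) (existT _ (fobj F c) (ext c S))).
  apply (H _ m). exists d, g, x, (gid _ _ _). split; [exact Hx|].
  cbn. rewrite cmp_id_r. reflexivity.
Qed.

(* naturality: the inequality >= uses Beck-Chevalley on the generators and
   flatness of F to lift the resulting spans and equations back to C *)
Lemma ext_natural c d (f : hom C c d) (S : Ipt C P J d) :
  ext c (Imap C P J c d f S) = pmap L (fmap F f) (ext d S).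
Proof.
  apply (geom_antisym L HG).
  - apply ext_le_iff. intros e g x Hx. cbn in Hx.
    rewrite <- pmap_cmp, <- fmap_cmp. apply ext_upper, Hx.
  - pose proof (beck_chevalley L HG _ _ (fmap F f) (ext d S) (ext_generators d S)
                  (ext_generators_sieve d S) (ext_generators_cover d S)) as Hc.
    apply (proj2 (Hc (ext c (Imap C P J c d f S)))).
    intros [e W0] m' [d' [g [x [k [Hx E]]]]]. cbn in E |- *.
    destruct (flat_span _ Hflat e c d' (proj1_sig m') (proj1_sig k))
      as [c0 [a1 [a2 [k0 [E1 E2]]]]].
    assert (Heq : cmp (fmap F (cmp f a1)) k0 = cmp (fmap F (cmp g a2)) k0).
    { rewrite !fmap_cmp, <- !cmp_assoc, E1, E2. exact E. }
    destruct (flat_equalizer _ Hflat e c0 d (cmp f a1) (cmp g a2) k0 Heq)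
      as [c1 [e' [k1 [E3 E4]]]].
    assert (Hin : proj1_sig S c1 (cmp f (cmp a1 e')) (pmap P (cmp a2 e') x)).
    { pose proof (proj1 (proj2_sig S) d' c1 g x (cmp a2 e') _ Hx (ple_refl _ _ _ _)) as H1.
      rewrite cmp_assoc, <- E3, <- cmp_assoc in H1. exact H1. }
    pose proof (ext_upper c (Imap C P J c d f S) c1 (cmp a1 e') _ Hin) as Hup.
    rewrite hn in Hup.
    eapply ple_trans; [exact (proj2_sig k)|].
    rewrite <- E2, <- E4, cmp_assoc, <- fmap_cmp, pmap_cmp.
    eapply ple_trans; [apply pmap_mono, Hup|].
    rewrite <- pmap_cmp, fmap_cmp, <- cmp_assoc, E4, E1. apply ple_refl.
Qed.

Definition ext_mor : Mor1 I L := @Build_Mor1 C D I L F ext.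

Lemma ext_mor_mono : a_mono ext_mor.
Proof. intros c x y H; exact (ext_mono c x y H). Qed.

Lemma ext_mor_nat : a_nat ext_mor.
Proof. intros c d f y. exact (ext_natural c d f y). Qed.

Local Notation Fo := (rt_o ext_mor).
Local Notation Fm := (rt_m ext_mor ext_mor_mono ext_mor_nat).

Lemma ext_covering a (R : sieve (groth I) a) :
  Kgeom I a R -> Kgeom L (Fo a) (image_sieve Fo Fm R).
Proof.
  destruct a as [c S0]. intros [_ HRc]. split; [apply image_sieve_is_sieve|].
  apply covers_join_intro. intros Z H. cbn. apply ext_le_preimage.
  apply (proj2 (HRc (preimage_ideal c Z))).
  intros [d T] h Hh d' k y Hy. cbn in *.
  set (kk := exist _ (fmap F k) (ext_upper d T d' k y Hy)
             : hom (groth L) (existT _ (fobj F d') (ma u d' y)) (existT _ (fobj F d) (ext d T))).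
  pose proof (H _ (cmp (Fm _ _ h) kk)) as H1. cbn in H1. rewrite fmap_cmp. apply H1.
  exists (existT _ d T), h, kk. split; [exact Hh | reflexivity].
Qed.

(* local non-emptiness is inherited from u, since ext (eta x) = a x *)
Lemma ext_nonempty (d : groth L) :
  Kgeom L d (fun e _ => exists c : groth I, inhabited (hom (groth L) e (Fo c))).
Proof.
  destruct (Hsub _ _ (proj1 (proj2 Hmos) d)) as [_ Hc].
  apply (Kgeom_upward L d _ _ Hc).
  - intros b b' h g [c [k]]. exists c. constructor. exact (cmp k g).
  - intros b h [[c x] [k]]. exists (existT _ c (eta P J c x)). constructor.
    refine (exist _ (proj1_sig k) _). cbn. rewrite ext_eta. exact (proj2_sig k).
Qed.

(* a span of u-images of generators (f,x) in S1, (f',x') in S2 gives a span of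
   ext-images, through the objects (c, eta y) *)
Lemma span_through_generators (b : groth L) c1 (S1 : Ipt C P J c1) c2 (S2 : Ipt C P J c2)
  d1 (f : hom C d1 c1) x d2 (f' : hom C d2 c2) x'
  (Hx : proj1_sig S1 d1 f x) (Hx' : proj1_sig S2 d2 f' x')
  (g1 : hom (groth L) b (Fo (existT _ c1 S1))) (g2 : hom (groth L) b (Fo (existT _ c2 S2)))
  (k1 : hom (groth L) b (rt_o u (existT _ d1 x))) (k2 : hom (groth L) b (rt_o u (existT _ d2 x')))
  (E1 : proj1_sig g1 = cmp (fmap F f) (proj1_sig k1))
  (E2 : proj1_sig g2 = cmp (fmap F f') (proj1_sig k2)) :
  forall e h, span_sieve (rt_o u) (rt_m u hm hn) k1 k2 e h -> span_sieve Fo Fm g1 g2 e h.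
Proof.
  intros e h [[c y] [f1 [f2 [k [B1 B2]]]]].
  apply (f_equal (@proj1_sig _ _)) in B1, B2. cbn in B1, B2.
  assert (Hin1 : proj1_sig S1 c (cmp f (proj1_sig f1)) y)
    by exact (proj1 (proj2_sig S1) _ _ f x (proj1_sig f1) y Hx (proj2_sig f1)).
  assert (Hin2 : proj1_sig S2 c (cmp f' (proj1_sig f2)) y)
    by exact (proj1 (proj2_sig S2) _ _ f' x' (proj1_sig f2) y Hx' (proj2_sig f2)).
  assert (Hk : ple L (projT2 e) (pmap L (proj1_sig k) (ext c (eta P J c y)))).
  { rewrite ext_eta. exact (proj2_sig k). }
  exists (existT _ c (eta P J c y)),
    (exist _ (cmp f (proj1_sig f1)) (proj1 (mem_iff_eta_le P J c1 S1 c _ y) Hin1)),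
    (exist _ (cmp f' (proj1_sig f2)) (proj1 (mem_iff_eta_le P J c2 S2 c _ y) Hin2)),
    (exist _ (proj1_sig k) Hk).
  split; apply sig_ext; cbn; rewrite fmap_cmp, <- cmp_assoc.
  - rewrite B1, cmp_assoc. cbn in E1. rewrite E1. reflexivity.
  - rewrite B2, cmp_assoc. cbn in E2. rewrite E2. reflexivity.
Qed.

(* local connectedness: cover d by the generators through which g1 factors,
   then by those through which g2 factors, and use the span condition for u *)
Lemma ext_spans (d : groth L) (a1 a2 : groth I)
  (g1 : hom (groth L) d (Fo a1)) (g2 : hom (groth L) d (Fo a2)) :
  Kgeom L d (span_sieve Fo Fm g1 g2).
Proof.
  destruct a1 as [c1 S1], a2 as [c2 S2].
  assert (Hgen : forall c S b (g : hom (groth L) b (existT _ (fobj F c) (ext c S))),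
             Kgeom L b (pull g (ext_generators c S))).
  { intros c S b g. split; [apply pull_sieve, ext_generators_sieve|].
    apply (Kgeom_pull L HG); [apply ext_generators_sieve | apply ext_generators_cover]. }
  apply (Kgeom_local L d _ _ (Hgen c1 S1 d g1)); [apply span_sieve_is_sieve|].
  intros b h [d1 [f [x [k [Hx E]]]]].
  refine (proj2 (Kgeom_local L b _ _ (Hgen c2 S2 b (cmp g2 h)) _ _));
    [apply pull_sieve, span_sieve_is_sieve|].
  intros b' h' [d2 [f' [x' [k' [Hx' E']]]]].
  destruct (Hsub _ _ (proj1 (proj2 (proj2 Hmos)) b' (existT _ d1 x) (existT _ d2 x')
                        (cmp k h') k')) as [_ Hc].
  refine (proj2 (Kgeom_upward L b' _ _ Hc _ _));
    [apply pull_sieve, pull_sieve, span_sieve_is_sieve|].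
  intros e h'' Hh''. unfold pull. apply span_sieve_pull, span_sieve_pull.
  apply (span_through_generators b' c1 S1 c2 S2 d1 f x d2 f' x' Hx Hx' _ _ (cmp k h') k');
    [cbn in *; rewrite E; symmetry; apply cmp_assoc | exact E' | exact Hh''].
Qed.

(* local equalizers: over each generator through which g factors, use
   flatness of F to equalize in C, and eta to return to I(P,J) *)
Lemma ext_equalizers (d : groth L) (a1 a2 : groth I) (f1 f2 : hom (groth I) a1 a2)
  (g : hom (groth L) d (Fo a1)) :
  cmp (Fm _ _ f1) g = cmp (Fm _ _ f2) g ->
  Kgeom L d (fun e h => exists c (e' : hom (groth I) c a1) (k : hom (groth L) e (Fo c)),
                cmp f1 e' = cmp f2 e' /\ cmp (Fm _ _ e') k = cmp g h).
Proof.
  destruct d as [e W], a1 as [c1 S1], a2 as [c2 S2]. intros Hg.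
  refine (Kgeom_upward L _ (pull g (ext_generators c1 S1)) _
            (Kgeom_pull L HG _ _ g _ (ext_generators_sieve c1 S1) (ext_generators_cover c1 S1))
            _ _).
  - intros b b' h h' [c [e' [k [E1 E2]]]]. exists c, e', (cmp k h'). split; [exact E1|].
    rewrite cmp_assoc, E2. symmetry; apply cmp_assoc.
  - intros [e0 W0] h [d0 [f [x [k [Hx E]]]]].
    apply (f_equal (@proj1_sig _ _)) in Hg.
    destruct h as [h0 ph], k as [k0 pk], g as [g0 pg], f1 as [f10 pf1], f2 as [f20 pf2].
    cbn in *.
    assert (Heq : cmp (fmap F (cmp f10 f)) k0 = cmp (fmap F (cmp f20 f)) k0).
    { rewrite !fmap_cmp, <- !cmp_assoc, <- E, !cmp_assoc, Hg. reflexivity. }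
    destruct (flat_equalizer _ Hflat _ _ _ _ _ _ Heq) as [c0 [e1 [k1 [E3 E4]]]].
    assert (Hin : proj1_sig S1 c0 (cmp f e1) (pmap P e1 x))
      by exact (proj1 (proj2_sig S1) _ _ f x e1 _ Hx (ple_refl _ _ _ _)).
    assert (Hk : ple L W0 (pmap L k1 (ext c0 (eta P J c0 (pmap P e1 x))))).
    { rewrite ext_eta, hn, <- pmap_cmp, E4. exact pk. }
    exists (existT _ c0 (eta P J c0 (pmap P e1 x))),
      (exist _ (cmp f e1) (proj1 (mem_iff_eta_le P J c1 S1 c0 _ _) Hin)),
      (exist _ k1 Hk).
    split; apply sig_ext; cbn.
    + rewrite !cmp_assoc, E3. reflexivity.
    + rewrite fmap_cmp, <- cmp_assoc, E4, E. reflexivity.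
Qed.

Lemma ext_mos : is_mos (Kgeom I) (Kgeom L) Fo Fm.
Proof.
  split; [exact ext_covering|]. split; [exact ext_nonempty|].
  split; [exact ext_spans | exact ext_equalizers].
Qed.
End Extension.

(* precomposing with the identity functor changes only proof fields *)
Lemma mor1_Fcomp_id {C D} {P : Doctrine C} {Q : Doctrine D} (F : Functor C D)
  (a : forall c, pt P c -> pt Q (fobj F c)) :
  Build_Mor1 C D P Q (Fcomp F (FId C)) a = Build_Mor1 C D P Q F a.
Proof.
  destruct F as [o m i cc]. unfold Fcomp; cbn.
  match goal with |- Build_Mor1 _ _ _ _ (Build_Functor _ _ _ _ ?p ?q) _ = _ =>
    rewrite (proof_irrelevance _ p i), (proof_irrelevance _ q cc) end.
  reflexivity.
Qed.

Lemma mor1_ma_inj {C D} {P : Doctrine C} {Q : Doctrine D} (F : Functor C D)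
  (a1 a2 : forall c, pt P c -> pt Q (fobj F c)) :
  Build_Mor1 C D P Q F a1 = Build_Mor1 C D P Q F a2 -> a1 = a2.
Proof.
  intros E. apply (inj_pair2 _ (fun F : Functor C D => forall c, pt P c -> pt Q (fobj F c))).
  exact (f_equal (fun m => existT _ (mF m) (ma m)) E).
Qed.

Lemma ext_restricts {C} (P : Doctrine C) (J : topology (groth P)) {D} (L : Doctrine D)
  (JL : topology (groth L)) (u : Mor1 P L) (hm : a_mono u) (hn : a_nat u)
  (Hmos : is_mos J JL (rt_o u) (rt_m u hm hn))
  (Hsub : forall a S, JL a S -> Kgeom L a S) (HG : IsGeom L) :
  comp1 (ext_mor P J L u HG) (eta_mor P J) = u.
Proof.
  pose proof (ext_eta P J L JL u hm hn Hmos Hsub HG) as Heta. clear Hmos.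
  destruct u as [F a]. unfold comp1, ext_mor, eta_mor. cbn [mF ma] in *.
  rewrite mor1_Fcomp_id. f_equal.
  apply functional_extensionality_dep; intro c. apply functional_extensionality; intro x.
  apply Heta.
Qed.

(* Cells out of I(P,J) are determined by their restriction along eta, as long
   as they preserve K-covers: every element is covered by eta-generators. *)
Section Restriction.
Context {C : Cat} (P : Doctrine C) (J : topology (groth P)) {D : Cat} (L : Doctrine D).
Local Notation I := (Idoc P J).

Definition cover_preserving (w : Mor1 I L) (hw : a_mono w) (hnw : a_nat w) : Prop :=
  forall a S, Kgeom I a S ->
    Kgeom L (rt_o w a) (image_sieve (rt_o w) (rt_m w hw hnw) S).

Lemma cover_preserving_le_iff (w : Mor1 I L) hw hnw (Hc : cover_preserving w hw hnw)
  c (S : Ipt C P J c) Z :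
  ple L (ma w c S) Z <->
  (forall d f x, proj1_sig S d f x ->
     ple L (ma w d (eta P J d x)) (pmap L (fmap (mF w) f) Z)).
Proof.
  split.
  - intros H d f x Hx.
    eapply ple_trans; [apply hw, (proj1 (mem_iff_eta_le P J c S d f x) Hx)|].
    rewrite (hnw d c f S : ma w d (Imap C P J d c f S) = _). apply pmap_mono, H.
  - intros H. destruct (Hc _ _ (eta_generators_cover P J c S)) as [_ Hcov].
    apply (proj2 (Hcov Z)).
    intros [e W0] g [[d' T] [h [[k1 pk1] [[d [x [[h0 ph0] [[k0 pk0] ->]]]] ->]]]].
    cbn in *.
    eapply ple_trans; [exact pk1|].
    rewrite fmap_cmp, !pmap_cmp. apply pmap_mono.
    eapply ple_trans; [apply hw, pk0|].
    rewrite (hnw d' d k0 (eta P J d x) : ma w d' (Imap C P J d' d k0 _) = _).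
    apply pmap_mono, H.
    exact (proj2 (mem_iff_eta_le P J c S d h0 x) ph0).
Qed.

Lemma restriction_injective (HG : IsGeom L) (w1 w2 : Mor1 I L)
  hw1 hn1 (Hc1 : cover_preserving w1 hw1 hn1) hw2 hn2 (Hc2 : cover_preserving w2 hw2 hn2) :
  comp1 w1 (eta_mor P J) = comp1 w2 (eta_mor P J) -> w1 = w2.
Proof.
  pose proof (cover_preserving_le_iff w1 hw1 hn1 Hc1) as Ch1.
  pose proof (cover_preserving_le_iff w2 hw2 hn2 Hc2) as Ch2.
  clear Hc1 Hc2 hw1 hw2 hn1 hn2.
  destruct w1 as [F1 a1], w2 as [F2 a2]. unfold comp1, eta_mor. cbn [mF ma] in *.
  rewrite !mor1_Fcomp_id. intros E.
  assert (EF : F1 = F2) by exact (f_equal mF E). subst F2.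
  apply mor1_ma_inj in E.
  assert (Ea : forall d x, a1 d (eta P J d x) = a2 d (eta P J d x))
    by (intros d x; exact (f_equal (fun g => g d x) E)).
  f_equal. apply functional_extensionality_dep; intro c.
  apply functional_extensionality; intro S.
  apply (geom_antisym L HG).
  - apply Ch1. intros d f x Hx. rewrite Ea.
    exact (proj1 (Ch2 c S _) (ple_refl _ _ _ _) d f x Hx).
  - apply Ch2. intros d f x Hx. rewrite <- Ea.
    exact (proj1 (Ch1 c S _) (ple_refl _ _ _ _) d f x Hx).
Qed.

Lemma two_cells_restrict (v v' : Mor1 I L) hw hn (Hc : cover_preserving v hw hn)
  hw' hn' (Hc' : cover_preserving v' hw' hn')
  (al : forall c, hom D (fobj (mF v) c) (fobj (mF v') c)) :
  Is2Cell v v' al <-> Is2Cell (comp1 v (eta_mor P J)) (comp1 v' (eta_mor P J)) al.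
Proof.
  split; intros [Hn Hl]; split; [exact Hn | intros c x; exact (Hl c (eta P J c x)) | exact Hn |].
  intros c S. apply (proj2 (cover_preserving_le_iff v hw hn Hc c S _)).
  intros d f x Hx.
  assert (Enat : pmap L (al d) (pmap L (fmap (mF v') f) (ma v' c S))
                 = pmap L (fmap (mF v) f) (pmap L (al c) (ma v' c S))).
  { rewrite <- !pmap_cmp. f_equal. symmetry. exact (Hn d c f). }
  eapply ple_trans; [exact (Hl d x)|]. rewrite <- Enat. apply pmap_mono.
  exact (proj1 (cover_preserving_le_iff v' hw' hn' Hc' c S _) (ple_refl _ _ _ _) d f x Hx).
Qed.
End Restriction.

Lemma universal_extension (X : DocSite) (G : GDoc) (JL : topology (groth (gL G)))
  (Hsub : forall a S, JL a S -> Kgeom (gL G) a S) (HG : IsGeom (gL G))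
  (u : Mor1 (sP X) (gL G)) :
  IsDocMor X (toSite G JL) u ->
  exists! v : Mor1 (gL (Isite X)) (gL G),
    IsDocMor (KSite (Isite X)) (KSite G) v /\ comp1 v (etaMor X) = u.
Proof.
  intros [Hflat [hm [hn Hmos]]].
  set (P := sP X). set (J := sJ X). set (L := gL G).
  assert (Hext : IsDocMor (KSite (Isite X)) (KSite G) (ext_mor P J L u HG)).
  { split; [exact Hflat|].
    exists (ext_mor_mono P J L u HG), (ext_mor_nat P J L u hn Hflat HG).
    exact (ext_mos P J L JL u hm hn Hmos Hsub Hflat HG). }
  exists (ext_mor P J L u HG).
  split; [split; [exact Hext | exact (ext_restricts P J L JL u hm hn Hmos Hsub HG)]|].
  intros w [[_ [hw [hnw Hw]]] Ew]. destruct Hext as [_ [he [hne He]]].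
  apply (restriction_injective P J L HG _ _ he hne (proj1 He) hw hnw (proj1 Hw)).
  transitivity u; [exact (ext_restricts P J L JL u hm hn Hmos Hsub HG) | symmetry; exact Ew].
Qed.

Theorem theorem6p2
  (AObj : DocSite -> Prop)
  (AMor : forall X Y : DocSite, Mor1 (sP X) (sP Y) -> Prop)
  (GA : GDoc -> Prop)
  (JA : forall G : GDoc, topology (groth (gL G)))
  (H : CoarseCompletion AObj AMor GA JA)
  (X : DocSite) (G : GDoc) (HX : AObj X) (HG : GA G) :
  GA (Isite X) /\
  (forall v : Mor1 (gL (Isite X)) (gL G),
      IsDocMor (KSite (Isite X)) (KSite G) v ->
      AMor X (toSite G (JA G)) (comp1 v (etaMor X))) /\
  (forall u : Mor1 (sP X) (gL G),
      AMor X (toSite G (JA G)) u ->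
      exists! v : Mor1 (gL (Isite X)) (gL G),
        IsDocMor (KSite (Isite X)) (KSite G) v /\ comp1 v (etaMor X) = u) /\
  (forall v v' : Mor1 (gL (Isite X)) (gL G),
      IsDocMor (KSite (Isite X)) (KSite G) v ->
      IsDocMor (KSite (Isite X)) (KSite G) v' ->
      forall al : forall c, hom (gC G) (fobj (mF v) c) (fobj (mF v') c),
        Is2Cell v v' al <-> Is2Cell (comp1 v (etaMor X)) (comp1 v' (etaMor X)) al).
Proof.
  destruct H as [_ Hmor _ Hcomp Hgeom Hsubs HJobj HJmor HI Heta].
  split; [exact (HI X HX)|]. split; [|split].
  - (* precomposition: eta is an A-morphism and A-morphisms compose *)
    intros v Hv.
    exact (Hcomp _ _ _ _ _ HX (HJobj _ (HI X HX)) (HJobj G HG) (Heta X HX)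
             (HJmor _ _ v (HI X HX) HG Hv)).
  - (* bijection on 1-cells: A-morphisms are morphisms of sites, J^A_L <= K_L *)
    intros u Hu.
    exact (universal_extension X G (JA G) (Hsubs G HG) (Hgeom G HG) u
             (Hmor X (toSite G (JA G)) u HX (HJobj G HG) Hu)).
  - (* bijection on 2-cells: morphisms of geometric doctrines preserve covers *)
    intros v v' [_ [hw [hn Hv]]] [_ [hw' [hn' Hv']]] al.
    exact (two_cells_restrict (sP X) (sJ X) (gL G) v v' hw hn (proj1 Hv) hw' hn' (proj1 Hv') al).
Qed.
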